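(* Let $(X,\beta,m)$ be a non-atomic standard probability space, $\tau$ an ergodic invertible measure-preserving map of $X$, and $(\epsilon_n)_{n\ge1}$ a sequence decreasing to $0$ with $0<\epsilon_n\le1$ for all $n$. Then there is a decreasing sequence $(B_n)_{n\ge1}$ of measurable sets with $\lim_n m(B_n)=0$ and $m(B_n)\ge\epsilon_n$ for all $n$, which is an a.e. invisible measure-theoretic shrinking target for $\tau$: for a.e. $x\in X$, $\tau^n(x)\in B_n$ for only finitely many $n$.
   Context: A measure-theoretic shrinking target is a decreasing sequence of measurable sets $(B_n)$ with $m(B_n)\to0$. *)

From HB Require Import structures.
From mathcomp Require Import all_boot all_order all_algebra.
From mathcomp Require Import all_classical all_reals all_analysis.
Set Implicit Arguments. Unset Strict Implicit. Unset Printing Implicit Defensive.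
Import Order.TTheory GRing.Theory Num.Theory.
Local Open Scope classical_set_scope.
Local Open Scope ring_scope.

(* Standard Borel space: Borel-isomorphic to a Borel subset of R
   (equivalent, by Kuratowski, to being Borel-isomorphic to a Borel subset
   of a Polish space). *)
Definition standard_borel {d : measure_display} (X : measurableType d)
  (R : realType) : Prop :=
  exists f : X -> R,
    [/\ injective f, measurable_fun setT f, measurable (f @` setT) &
        forall A : set X, measurable A -> measurable (f @` A)].

Definition non_atomic {d : measure_display} (X : measurableType d)
  (R : realType) (m : set X -> \bar R) : Prop :=
  forall A : set X, measurable A -> (0 < m A)%E ->
    exists2 B : set X, measurable B /\ B `<=` A & (0 < m B)%E /\ (m B < m A)%E.

Definition invertible_mp {d : measure_display} (X : measurableType d)
  (R : realType) (m : set X -> \bar R) (tau : X -> X) : Prop :=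
  exists sigma : X -> X,
    [/\ cancel tau sigma, cancel sigma tau,
        measurable_fun setT tau, measurable_fun setT sigma &
        forall A : set X, measurable A -> m (tau @^-1` A) = m A].

Definition ergodic {d : measure_display} (X : measurableType d)
  (R : realType) (m : set X -> \bar R) (tau : X -> X) : Prop :=
  forall A : set X, measurable A -> tau @^-1` A = A ->
    m A = 0%E \/ m A = 1%E.

From HB Require Import structures.
From mathcomp Require Import all_boot all_order all_algebra.
From mathcomp Require Import all_classical all_reals all_analysis.
From mathcomp Require Import lra zify.
Set Implicit Arguments.
Unset Strict Implicit.
Unset Printing Implicit Defensive.
Import Order.TTheory GRing.Theory Num.Theory.
Local Open Scope classical_set_scope.
Local Open Scope ring_scope.

(* Let sigma be the inverse of tau.  Given L and a small delta, choose F with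
   (L + 1) m(F) <= delta (non-atomicity) and split the backward orbit of F,
   which is of full measure by ergodicity, into the first-entrance sets
   S_j = {x | j is the least a with sigma^a x in F}.  Since tau^-n S_j is
   contained in S_(j-n), a union D of consecutive S_j with j >= L and
   delta <= m(D) <= delta + m(F) satisfies
     m(U_(n<L) tau^-n D) <= m(S_0 u ... u S_(L-1)) + m(D) <= 2 delta.
   Gluing such sets D_k, for delta_k = 2^-(k+2) and L_k read off from eps,
   into one decreasing target makes sum_k m(U_(n<L_k) tau^-n D_k) finite,
   and Borel-Cantelli shows that almost every orbit visits the target only
   finitely often. *)

Lemma increasing_nat_block (N : nat -> nat) n :
  {homo N : i j / (i < j)%N} -> (N 0 <= n)%N ->
  exists j, (N j <= n < N j.+1)%N.
Proof.
move=> Ninc; have N01 : (N 0 < N 1)%N by exact: Ninc.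
elim: n => [|n IH].
  by move=> N0; exists 0%N; rewrite N0 (leq_ltn_trans (leq0n _) N01).
rewrite leq_eqVlt => /orP [/eqP <-|/IH [j /andP [Njn nNj]]].
  by exists 0%N; rewrite leqnn N01.
have [nNj'|] := ltnP n.+1 (N j.+1); first by exists j; rewrite nNj' ltnW.
rewrite leq_eqVlt ltnNge nNj orbF => /eqP <-.
by exists j.+1; rewrite leqnn (Ninc j.+1 j.+2).
Qed.

Lemma eventually_below_times (R : realType) (u delta : nat -> R) :
  u @ \oo --> 0 -> (forall k, 0 < delta k) ->
  exists N : nat -> nat, {homo N : i j / (i < j)%N} /\
    forall k n, (N k <= n)%N -> u n < delta k.
Proof.
move=> u0 delta0.
have [P HP] : {P : nat -> nat & forall k n, (P k <= n)%N -> u n < delta k}.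
  apply: (@choice _ _ (fun k p => forall n, (p <= n)%N -> u n < delta k)) => k.
  have [P _ HP] := cvgr_lt 0 u0 (delta k) (delta0 k).
  by exists P => n Pn; exact: HP.
exists (fun k => \sum_(i < k.+1) (P i).+1)%N; split.
  apply: homo_ltn => [y x z|k]; first exact: ltn_trans.
  by rewrite [X in (_ < X)%N]big_ord_recr /= addnS ltnS leq_addr.
move=> k n; rewrite big_ord_recr /= => Pn; apply: HP.
by apply: leq_trans Pn; rewrite (leq_trans (leqnSn _)) ?leq_addl.
Qed.

Section iterates.
Context d (X : measurableType d) (R : realType).
Variable mu : {measure set X -> \bar R}.

Lemma measurable_fun_iter (f : X -> X) n :
  measurable_fun setT f -> measurable_fun setT (iter n f).
Proof.
move=> mf; elim: n => [|n IH]; first exact: measurable_id.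
rewrite (_ : iter n.+1 f = f \o iter n f); last first.
  by apply/funext => x; rewrite iterS.
exact: measurableT_comp.
Qed.

Lemma measurable_preimage_iter (f : X -> X) n A :
  measurable_fun setT f -> measurable A -> measurable (iter n f @^-1` A).
Proof.
move=> mf mA; rewrite -(setTI (_ @^-1` _)).
exact: (measurable_fun_iter n mf).
Qed.

Lemma measure_preimage_iter (f : X -> X) n A :
  measurable_fun setT f ->
  (forall B, measurable B -> mu (f @^-1` B) = mu B) ->
  measurable A -> mu (iter n f @^-1` A) = mu A.
Proof.
move=> mf fmp; elim: n A => [//|n IH] A mA.
rewrite (_ : iter n.+1 f @^-1` A = iter n f @^-1` (f @^-1` A)); last first.
  by apply/seteqP; split => x.
by rewrite IH ?fmp //; rewrite -(setTI (_ @^-1` _)); exact: mf.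
Qed.

Lemma measure_bigcup_ord_le (F : nat -> set X) n :
  (forall k, measurable (F k)) ->
  (mu (\bigcup_(k < n) F k) <= \sum_(k < n) mu (F k))%E.
Proof.
move=> mF; apply: content_subadditive => //.
  by rewrite bigcup_mkord; exact: bigsetU_measurable.
by rewrite bigcup_mkord.
Qed.

Lemma nondecreasing_measure_crossing (T : (set X)^nat) (delta c : R) :
  (forall M, measurable (T M)) -> nondecreasing_seq T -> T 0%N = set0 ->
  0 < delta -> (forall M, mu (T M.+1) <= mu (T M) + c%:E)%E ->
  (delta%:E < mu (\bigcup_M T M))%E ->
  exists M, (delta%:E <= mu (T M) <= (delta + c)%:E)%E.
Proof.
move=> mT Tnd T0 delta0 Tstep Tbig.
have exM : exists M, (delta%:E <= mu (T M))%E.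
  apply: contrapT => /forallNP Tsmall.
  have Tcvg := nondecreasing_cvg_mu (mu := mu) mT (bigcupT_measurable _ mT) Tnd.
  suff : (mu (\bigcup_M T M) <= delta%:E)%E by rewrite leNgt Tbig.
  rewrite -(cvg_lim _ Tcvg) //; apply: lime_le; first exact: cvgP Tcvg.
  by apply: nearW => M /=; rewrite leNgt; apply/negP => /ltW; exact: Tsmall.
have [[|M] deltaT minM] := ex_minnP exM.
  by move: deltaT; rewrite T0 measure0 lee_fin leNgt delta0.
exists M.+1; rewrite deltaT /=.
have TM : (mu (T M) < delta%:E)%E.
  by rewrite ltNge; apply/negP => /minM; rewrite ltnn.
by apply: le_trans (Tstep M) _; rewrite EFinD leeD2r // ltW.
Qed.

End iterates.

Section glued_target.
Context d (X : measurableType d) (R : realType).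
Variable mu : {measure set X -> \bar R}.
Variables (f : X -> X) (N : nat -> nat) (D : nat -> set X).
Hypotheses (mf : measurable_fun setT f) (N_inc : {homo N : i j / (i < j)%N})
  (mD : forall k, measurable (D k)).

Definition glued_target n :=
  (if (n < N 0)%N then setT else set0) `|`
  \bigcup_(j in [set j | (n < N j.+1)%N]) D j.

Definition glued_visits k := \bigcup_(n < N k.+1) (iter n f @^-1` D k).

Lemma measurable_glued_target n : measurable (glued_target n).
Proof.
apply: measurableU; last by apply: bigcup_measurable => j _; exact: mD.
by case: ifP.
Qed.

Lemma measurable_glued_visits k : measurable (glued_visits k).
Proof. by apply: bigcup_measurable => n _; exact: measurable_preimage_iter. Qed.

Lemma glued_target_nonincreasing n : glued_target n.+1 `<=` glued_target n.
Proof.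
move=> x [|[j /ltnW nNj Dx]]; last by right; exists j.
by case: ifPn => // nN0 _; left; rewrite ltnW.
Qed.

Lemma glued_target_late K n x : (N K <= n)%N -> glued_target n x ->
  exists2 j, (K <= j)%N & (n < N j.+1)%N /\ D j x.
Proof.
move=> Kn [|[j /= nNj Dx]].
  case: ifPn => // nN0 _.
  by move: (leq_ltn_trans Kn nN0); rewrite ltnNge (leq_mono N_inc).
exists j => //; rewrite leqNgt; apply/negP => jK.
have NjK : (N j.+1 <= N K)%N by rewrite (leq_mono N_inc).
by move: (leq_trans NjK Kn); rewrite leqNgt nNj.
Qed.

Lemma glued_target_init n : (n < N 0)%N -> glued_target n = setT.
Proof. by move=> nN0; apply/seteqP; split => // x _; left; rewrite nN0. Qed.

Lemma sub_glued_target j n : (n < N j.+1)%N -> D j `<=` glued_target n.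
Proof. by move=> nNj x Dx; right; exists j. Qed.

Lemma le_measure_glued_target j n : (n < N j.+1)%N ->
  (mu (D j) <= mu (glued_target n))%E.
Proof.
move=> nNj; apply: le_measure; rewrite ?inE; last exact: sub_glued_target.
  exact: mD.
exact: measurable_glued_target.
Qed.

Lemma sub_glued_visits k : D k `<=` glued_visits k.
Proof.
move=> x Dx; exists 0%N => //=.
by rewrite (leq_ltn_trans (leq0n _) (N_inc (ltnSn k))).
Qed.

Hypothesis visits_summable : (\sum_(k <oo) mu (glued_visits k) < +oo)%E.

Lemma measure_glued_target_cvg0 : mu (glued_target n) @[n --> \oo] --> 0%E.
Proof.
have D_summable : (\sum_(k <oo) mu (D k) < +oo)%E.
  apply: le_lt_trans visits_summable.
  apply: lee_nneseries => [k _ _|k _]; first exact: measure_ge0.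
  apply: le_measure; rewrite ?inE; last exact: sub_glued_visits.
    exact: mD.
  exact: measurable_glued_visits.
have B_step n : (mu (glued_target n.+1) <= mu (glued_target n))%E.
  apply: le_measure; rewrite ?inE; last exact: glued_target_nonincreasing.
    exact: measurable_glued_target.
  exact: measurable_glued_target.
have B_noninc :
    {homo (fun n => mu (glued_target n)) : a b / (a <= b)%N >-> (b <= a)%E}.
  apply: (homo_leq (r := fun a b => (b <= a)%E)) => // y x z xy yz.
  exact: le_trans yz xy.
suff <- : ereal_inf (range (fun n => mu (glued_target n))) = 0%E.
  exact: ereal_nonincreasing_cvgn.
apply/eqP; rewrite eq_le; apply/andP; split; last first.
  by apply: le_ereal_inf_tmp => _ [n _ <-]; exact: measure_ge0.
have tail0 := nneseries_tail_cvg D_summable (fun k _ => measure_ge0 mu (D k)).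
rewrite -(cvg_lim _ tail0) //; apply: lime_ge.
  by apply/cvg_ex; exists 0%E.
apply: nearW => K.
apply: le_trans (ereal_inf_lbound (ex_intro2 _ _ (N K) I erefl)) _.
apply: measure_sigma_subadditive_tail mD (measurable_glued_target _) _.
move=> x /(glued_target_late (leqnn _)) [j Kj [_ Dx]].
by exists j => //=; apply/negP; rewrite -leqNgt.
Qed.

Lemma glued_target_invisible :
  {ae mu, forall x, finite_set [set n | glued_target n (iter n f x)]}.
Proof.
exists (lim_sup_set glued_visits); split.
- apply: bigcapT_measurable => K; apply: bigcup_measurable => j _.
  exact: measurable_glued_visits.
- exact: lim_sup_set_cvg0 measurable_glued_visits visits_summable.
- move=> x /= infinite K _.
  have : ~ [set n | glued_target n (iter n f x)] `<=` `I_(N K).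
    by move=> sub; apply: infinite; exact: sub_finite_set sub (finite_II _).
  move=> /existsNP [n /not_implyP [Bn nK]].
  have Kn : (N K <= n)%N by rewrite leqNgt; apply/negP.
  have [j Kj [nNj Dj]] := glued_target_late Kn Bn.
  by exists j => //; exists n.
Qed.

End glued_target.

Section non_atomic_probability.
Context d (X : measurableType d) (R : realType) (m : probability X R).
Hypothesis m_na : non_atomic m.

Lemma non_atomic_halve A : measurable A -> (0 < m A)%E ->
  exists2 B, measurable B & (0 < m B)%E /\ (2%:E * m B <= m A)%E.
Proof.
move=> mA A0; have [B [mB BA] [B0 BA']] := m_na mA A0.
have [Bhalf|Bbig] := leP (2%:E * m B)%E (m A); first by exists B.
exists (A `\` B); first exact: measurableD.
have eA := fineK (fin_num_measure m A mA).
have eB := fineK (fin_num_measure m B mB).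
have -> : m (A `\` B) = (fine (m A) - fine (m B))%:E.
  by rewrite measureD ?(setIidr BA) ?EFinB ?eA ?eB // ltey_eq fin_num_measure.
move: Bbig B0 BA'; rewrite -eA -eB -EFinM !lte_fin -EFinM lee_fin.
by move=> *; split; lra.
Qed.

Lemma non_atomic_small_set (delta : R) : 0 < delta ->
  exists2 F, measurable F & (0 < m F <= delta%:E)%E.
Proof.
move=> delta0.
have small k : exists2 F, measurable F &
    (0 < m F)%E /\ ((2 ^ k)%:R%:E * m F <= 1)%E.
  elim: k => [|k [F mF [F0 Fk]]].
    by exists setT => //; rewrite probability_setT mul1e.
  have [B mB [B0 BF]] := non_atomic_halve mF F0.
  exists B => //; split => //; apply: le_trans Fk.
  by rewrite expnSr natrM EFinM -muleA lee_wpmul2l // lee_fin.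
set k := (Num.Def.truncn delta^-1).+1.
have [F mF [F0 Fk]] := small k; exists F => //; rewrite F0 /=.
have kP : delta^-1 < (2 ^ k)%:R.
  by apply: lt_le_trans (truncnS_gt _) _; rewrite ler_nat ltnW // ltn_expl.
rewrite -(ltr_pM2l delta0) mulfV ?gt_eqF // in kP.
have P0 : 0 < (2 ^ k)%:R :> R by rewrite ltr0n expn_gt0.
move: F0 Fk; rewrite -(fineK (fin_num_measure m F mF)) -EFinM lte_fin !lee_fin.
by move=> *; nra.
Qed.

End non_atomic_probability.

Section invertible_ergodic.
Context d (X : measurableType d) (R : realType) (m : probability X R).
Variables tau sigma : X -> X.
Hypotheses (tauK : cancel tau sigma) (mtau : measurable_fun setT tau)
  (msigma : measurable_fun setT sigma)
  (tau_mp : forall A, measurable A -> m (tau @^-1` A) = m A)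
  (tau_erg : ergodic m tau).

Lemma iter_tauK n x : iter n sigma (iter n tau x) = x.
Proof. by elim: n => // n IH; rewrite [iter n.+1 tau x]iterS iterSr tauK. Qed.

Lemma measure_preimage_sigma A : measurable A -> m (sigma @^-1` A) = m A.
Proof.
move=> mA; rewrite -tau_mp; last by rewrite -(setTI (_ @^-1` _)); exact: msigma.
by congr (m _); apply/seteqP; split => x /=; rewrite tauK.
Qed.

Lemma measure_backward_orbit F : measurable F -> (0 < m F)%E ->
  m (\bigcup_a (iter a sigma @^-1` F)) = 1%E.
Proof.
move=> mF F0; set W := \bigcup_a _.
have mW : measurable W.
  by apply: bigcupT_measurable => a; exact: measurable_preimage_iter.
pose G b := iter b tau @^-1` W.
have mG b : measurable (G b) by exact: measurable_preimage_iter.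
have mV := bigcupT_measurable _ mG.
have G_nd : nondecreasing_seq G.
  move=> b b' /subnK <-; apply/subsetPset => x [a _ Fx].
  by exists (a + (b' - b))%N => //=; rewrite iterD iterD iter_tauK.
have G_inv : tau @^-1` (\bigcup_b G b) = \bigcup_b G b.
  apply/seteqP; split => x /=.
    by case=> b _ [a _ Fx]; exists b.+1 => //; exists a => //; rewrite iterSr.
  case=> b _ [a _ Fx]; exists b => //; exists a.+1 => //.
  by rewrite /= -iterS iterSr -[iter b tau (tau x)]iterSr iterS tauK.
have V1 : m (\bigcup_b G b) = 1%E.
  have [V0|//] := tau_erg mV G_inv.
  have FV : F `<=` \bigcup_b G b by move=> x Fx; exists 0%N => //; exists 0%N.
  have : (0 < m (\bigcup_b G b))%E.
    exact: lt_le_trans F0 (le_measure m (mem_set mF) (mem_set mV) FV).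
  by rewrite V0 ltxx.
have : m \o G @ \oo --> m (\bigcup_b G b) := nondecreasing_cvg_mu mG mV G_nd.
rewrite V1 (_ : m \o G = cst (m W)); last first.
  by apply: funext => b /=; rewrite measure_preimage_iter.
by move=> /cvg_lim <- //; rewrite lim_cst.
Qed.

Definition entrance F j :=
  iter j sigma @^-1` F `\` \bigcup_(i < j) iter i sigma @^-1` F.

Lemma measurable_entrance F j : measurable F -> measurable (entrance F j).
Proof.
move=> mF; apply: measurableD; first exact: measurable_preimage_iter.
by apply: bigcup_measurable => i _; exact: measurable_preimage_iter.
Qed.

Lemma measure_entrance_le F j : measurable F -> (m (entrance F j) <= m F)%E.
Proof.
move=> mF; rewrite -(measure_preimage_iter j msigma measure_preimage_sigma mF).
apply: le_measure; rewrite ?inE; last by move=> x [].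
  exact: measurable_entrance.
exact: measurable_preimage_iter.
Qed.

Lemma measure_bigcup_entrance_le F L : measurable F ->
  (m (\bigcup_(j < L) entrance F j) <= m F *+ L)%E.
Proof.
move=> mF.
have mS j : measurable (entrance F j) by exact: measurable_entrance.
apply: le_trans (measure_bigcup_ord_le m L mS) _.
have -> : (m F *+ L = \sum_(k < L) m F)%E by rewrite sumr_const card_ord.
by apply: lee_sum => j _; exact: measure_entrance_le.
Qed.

Lemma backward_orbit_entrance F :
  \bigcup_a (iter a sigma @^-1` F) `<=` \bigcup_j entrance F j.
Proof.
move=> x [a _ Fa].
have exF : exists a, `[< F (iter a sigma x) >] by exists a; exact/asboolP.
have [j /asboolP Fj minj] := ex_minnP exF.
exists j => //; split => // -[i /= ij Fi].
by have := minj i (asboolT Fi); rewrite leqNgt ij.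
Qed.

Lemma preimage_iter_entrance F n k :
  iter n tau @^-1` entrance F (k + n) `<=` entrance F k.
Proof.
move=> x [Fx notF]; split; first by move: Fx; rewrite /= iterD iter_tauK.
move=> [i /= ik Fi]; apply: notF.
exists (i + n)%N; first by rewrite /= ltn_add2r.
by rewrite /= iterD iter_tauK.
Qed.

Hypothesis m_na : non_atomic m.

Lemma sparse_visit_set (L : nat) (delta : R) : 0 < delta -> 2 * delta < 1 ->
  exists D, [/\ measurable D, (delta%:E <= m D)%E &
    (m (\bigcup_(n < L) (iter n tau @^-1` D)) <= (2 * delta)%:E)%E].
Proof.
move=> delta0 delta_half.
have [F mF /andP [F0 F_small]] :=
  non_atomic_small_set m_na (divr_gt0 delta0 (ltr0Sn R L)).
set f := fine (m F); have Ff : m F = f%:E by rewrite fineK // fin_num_measure.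
have f0 : 0 < f by rewrite -lte_fin -Ff.
have fL0 : 0 <= f *+ L by rewrite mulrn_wge0 // ltW.
have fL : f + f *+ L <= delta.
  by rewrite -mulrS -mulr_natr -ler_pdivlMr ?ltr0Sn // -lee_fin -Ff.
pose prefix := \bigcup_(j < L) entrance F j.
pose block M := \bigcup_(i < M) entrance F (i + L).
have mprefix : measurable prefix.
  by apply: bigcup_measurable => j _; exact: measurable_entrance.
have mblock M : measurable (block M).
  by apply: bigcup_measurable => i _; exact: measurable_entrance.
have mU := bigcupT_measurable _ mblock.
have prefix_le : (m prefix <= (f *+ L)%:E)%E.
  by rewrite EFin_natmul -Ff; exact: measure_bigcup_entrance_le.
have block_nd : nondecreasing_seq block.
  move=> M M' MM'; apply/subsetPset => x [i /= iM Sx].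
  by exists i => //=; exact: leq_trans iM MM'.
have block0 : block 0%N = set0 by apply/seteqP; split => x // [].
have block_step M : (m (block M.+1) <= m (block M) + f%:E)%E.
  have mS := measurable_entrance (M + L) mF.
  rewrite -Ff.
  apply: (le_trans _ (leeD (lexx _) (measure_entrance_le (M + L) mF))).
  apply: (le_trans _ (measureU2 m (mblock M) mS)).
  apply: le_measure; rewrite ?inE; [exact: mblock|exact: measurableU|].
  move=> x [i /= + Sx]; rewrite ltnS leq_eqVlt => /orP [/eqP iM|iM].
    by right; rewrite -iM.
  by left; exists i.
have orbit_sub :
    \bigcup_a (iter a sigma @^-1` F) `<=` prefix `|` \bigcup_M block M.
  move=> x /backward_orbit_entrance [j _ Sx].
  have [jL|Lj] := ltnP j L; first by left; exists j.
  by right; exists (j - L).+1 => //; exists (j - L)%N => //=; rewrite subnK.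
have block_big : (delta%:E < m (\bigcup_M block M))%E.
  have : (1 <= (f *+ L)%:E + m (\bigcup_M block M))%E.
    rewrite -(measure_backward_orbit mF F0).
    apply: (le_trans _ (leeD prefix_le (lexx _))).
    apply: (le_trans _ (measureU2 m mprefix mU)).
    apply: le_measure; rewrite ?inE //; last exact: measurableU.
    by apply: bigcupT_measurable => a; exact: measurable_preimage_iter.
  rewrite -(fineK (fin_num_measure m _ mU)) -EFinD lee_fin lte_fin.
  by move=> *; lra.
have [M /andP [deltaD Dle]] :=
  nondecreasing_measure_crossing mblock block_nd block0 delta0 block_step
    block_big.
exists (block M); split => //.
have visits_sub :
    \bigcup_(n < L) (iter n tau @^-1` block M) `<=` prefix `|` block M.
  move=> x [n /= nL [i /= iM Sx]].
  have := @preimage_iter_entrance F n (i + L - n) x.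
  rewrite subnK; last by lia.
  move=> /(_ Sx) Sx'; have [jL|Lj] := ltnP (i + L - n) L.
    by left; exists (i + L - n)%N.
  by right; exists (i + L - n - L)%N; [rewrite /=; lia|rewrite subnK].
have mvisits : measurable (\bigcup_(n < L) (iter n tau @^-1` block M)).
  by apply: bigcup_measurable => n _; exact: measurable_preimage_iter.
apply: (le_trans (le_measure m (mem_set mvisits)
  (mem_set (measurableU _ _ mprefix (mblock M))) visits_sub)).
apply: (le_trans (measureU2 m mprefix (mblock M))).
apply: (le_trans (leeD prefix_le Dle)).
by rewrite -EFinD lee_fin; lra.
Qed.

Lemma summable_sparse_visits (N : nat -> nat) :
  exists D : nat -> set X, [/\ forall k, measurable (D k),
    forall k, ((2 ^ k.+2)%:R^-1%:E <= m (D k))%E &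
    (\sum_(k <oo) m (glued_visits tau N D k) < +oo)%E].
Proof.
have two_delta k : 2 * (2 ^ k.+2)%:R^-1 = 1 / (2 ^ (k + 1))%:R :> R.
  by rewrite addn1 div1r expnS natrM invfM mulrA mulfV ?mul1r // pnatr_eq0.
have delta0 k : 0 < (2 ^ k.+2)%:R^-1 :> R by rewrite invr_gt0 ltr0n expn_gt0.
have delta_half k : 2 * (2 ^ k.+2)%:R^-1 < 1 :> R.
  rewrite two_delta div1r invf_lt1 ?ltr0n ?expn_gt0 // ltr1n addn1 expnS.
  by have := expn_gt0 2 k; lia.
have [D HD] := choice (fun k =>
  sparse_visit_set (N k.+1) (delta0 k) (delta_half k)).
exists D; split => [k|k|]; [by case: (HD k)|by case: (HD k)|].
apply: (le_lt_trans (_ : _ <= \sum_(k <oo) (1 / (2 ^ (k + 1))%:R)%:E)%E).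
  apply: lee_nneseries => [k _ _|k _]; first exact: measure_ge0.
  by rewrite -two_delta; case: (HD k).
by rewrite (cvg_lim _ (@cvg_geometric_eseries_half R 1 0)) // ltry.
Qed.

End invertible_ergodic.

Theorem mainTheorem8 (d : measure_display) (X : measurableType d)
  (R : realType) (m : probability X R) (tau : X -> X) (eps : nat -> R) :
  standard_borel X R ->
  non_atomic m ->
  invertible_mp m tau ->
  ergodic m tau ->
  (forall n, (0 < n)%N -> 0 < eps n <= 1) ->
  (forall n, (0 < n)%N -> eps n.+1 <= eps n) ->
  eps @ \oo --> 0 ->
  exists B : nat -> set X,
    [/\ forall n, (0 < n)%N -> measurable (B n),
        forall n, (0 < n)%N -> B n.+1 `<=` B n,
        (fun n => m (B n)) @ \oo --> 0%E,
        forall n, (0 < n)%N -> ((eps n)%:E <= m (B n))%E &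
        {ae m, forall x, finite_set [set n | (0 < n)%N /\ B n (iter n tau x)]}].
Proof.
move=> _ m_na [sigma [tauK _ mtau msigma tau_mp]] tau_erg eps01 _ eps0.
pose delta k : R := (2 ^ k.+2)%:R^-1.
have delta0 k : 0 < delta k by rewrite invr_gt0 ltr0n expn_gt0.
have [N [N_inc eps_delta]] := eventually_below_times eps0 delta0.
have [D [mD deltaD visits_summable]] :=
  summable_sparse_visits tauK mtau msigma tau_mp tau_erg m_na N.
exists (glued_target N D); split.
- by move=> n _; exact: measurable_glued_target.
- by move=> n _; exact: glued_target_nonincreasing.
- exact: measure_glued_target_cvg0 mtau N_inc mD visits_summable.
- move=> n n0; have [nN0|N0n] := ltnP n (N 0%N).
    rewrite glued_target_init // probability_setT lee_fin.
    by case/andP: (eps01 n n0).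
  have [j /andP [Njn nNj]] := increasing_nat_block N_inc N0n.
  apply: le_trans (le_measure_glued_target m mD nNj).
  by apply: le_trans (deltaD j); rewrite lee_fin ltW ?eps_delta.
- apply: filterS (glued_target_invisible mtau N_inc mD visits_summable).
  by move=> x; apply: sub_finite_set => n [].
Qed.
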